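(* Let $f_0$ be a piecewise expanding unimodal map whose critical point $c$ is not periodic. Then: (A) For every $\eta>0$ there exists a neighborhood $W$ of $f_0$ in $\mathcal U^1$ (for the norm $|\cdot|_1$) such that $|J(f,v)-J(f_0,v)|\le\eta|v|_1$ for every $v\in\mathcal B^1(I)$ and every $f\in W$. (B) For every $v_0\in\mathcal B^0(I)$, the function $f\mapsto J(f,v_0)$ on $\mathcal U^1$ is continuous at $f=f_0$ with respect to the norm $|\cdot|_1$.
   Context: Let $I=[-1,1]$ and $c=0$. For $k\ge0$, $\mathcal B^k(I)$ is the Banach space of continuous $f:I\to\mathbb R$ that are $C^k$ on $[-1,0]$ and on $[0,1]$ with $f(1)=f(-1)$, normed by $|f|_k=\max\{|f|_{C^k[-1,0]},|f|_{C^k[0,1]}\}$, $|f|_{C^k(Q)}=\max_{0\le i\le k}\sup_Q|D^if|$. $\mathcal U^1$ is the set of piecewise expanding unimodal maps: $f\in\mathcal B^1(I)$ with $f(-1)=f(1)=-1$, $\inf_{x\in[-1,0]}Df(x)>1$, $\sup_{x\in[0,1]}Df(x)<-1$ and $f(0)\le1$. For bounded $v:I\to\mathbb R$: if $c$ is not periodic for $f$, $J(f,v)=\sum_{i=0}^\infty \frac{v(f^i(c))}{Df^i(f(c))}$; if $c$ has prime period $p$, $J(f,v)=\sum_{i=0}^{p-1}\frac{v(f^i(c))}{Df^i(f(c))}$. *)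

From Stdlib Require Import Reals Lra ClassicalEpsilon.
From Coquelicot Require Import Coquelicot.
Open Scope R_scope.

(* I = [-1,1], c = 0.  Functions are R -> R; only values on I matter. *)
Definition inI (x : R) : Prop := -1 <= x <= 1.
Definition inP (a b x : R) : Prop := a <= x <= b.

Definition is_pderiv (a b : R) (f g : R -> R) : Prop :=
  forall x, inP a b x ->
    filterlim (fun y => (f y - f x) / (y - x))
      (within (fun y => inP a b y /\ y <> x) (locally x)) (locally (g x)).

Definition cont_on (a b : R) (g : R -> R) : Prop :=
  forall x, inP a b x ->
    filterlim g (within (inP a b) (locally x)) (locally (g x)).

Definition C0_on (a b : R) (f : R -> R) : Prop := cont_on a b f.
Definition C1_on (a b : R) (f : R -> R) : Prop :=
  cont_on a b f /\ exists g, is_pderiv a b f g /\ cont_on a b g.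

(* The derivative on [a,b] as a function (well defined on [a,b] when it
   exists, by uniqueness of limits). *)
Definition pderiv (a b : R) (f : R -> R) (x : R) : R :=
  epsilon (inhabits 0) (fun l =>
    filterlim (fun y => (f y - f x) / (y - x))
      (within (fun y => inP a b y /\ y <> x) (locally x)) (locally l)).

(* Df on I: derivative of the left branch on [-1,0], right branch on (0,1].
   (The value at c = 0 is never used in J.) *)
Definition Df (f : R -> R) (x : R) : R :=
  if Rle_dec x 0 then pderiv (-1) 0 f x else pderiv 0 1 f x.

Definition Bk0 (f : R -> R) : Prop :=
  C0_on (-1) 0 f /\ C0_on 0 1 f /\ f 1 = f (-1).
Definition Bk1 (f : R -> R) : Prop :=
  C1_on (-1) 0 f /\ C1_on 0 1 f /\ f 1 = f (-1).

Definition sup_abs (P : R -> Prop) (h : R -> R) : R :=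
  real (Lub_Rbar (fun r => exists x, P x /\ r = Rabs (h x))).

Definition normC1 (a b : R) (f : R -> R) : R :=
  Rmax (sup_abs (inP a b) f) (sup_abs (inP a b) (pderiv a b f)).
Definition norm1 (f : R -> R) : R :=
  Rmax (normC1 (-1) 0 f) (normC1 0 1 f).

Definition U1 (f : R -> R) : Prop :=
  Bk1 f /\ f (-1) = -1 /\ f 1 = -1 /\
  (exists lam, lam > 1 /\ forall x, inP (-1) 0 x -> pderiv (-1) 0 f x >= lam) /\
  (exists lam, lam < -1 /\ forall x, inP 0 1 x -> pderiv 0 1 f x <= lam) /\
  f 0 <= 1.

Fixpoint iter (f : R -> R) (n : nat) (x : R) : R :=
  match n with O => x | S k => f (iter f k x) end.

Fixpoint Dfn (f : R -> R) (n : nat) (y : R) : R :=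
  match n with O => 1 | S k => Dfn f k y * Df f (iter f k y) end.

Definition prime_period (f : R -> R) (p : nat) : Prop :=
  (1 <= p)%nat /\ iter f p 0 = 0 /\
  forall q, (1 <= q < p)%nat -> iter f q 0 <> 0.

Definition c_periodic (f : R -> R) : Prop := exists p, (1 <= p)%nat /\ iter f p 0 = 0.

Definition Jterm (f v : R -> R) (i : nat) : R :=
  v (iter f i 0) / Dfn f i (f 0).

Definition J (f v : R -> R) : R :=
  if excluded_middle_informative (c_periodic f)
  then let p := epsilon (inhabits 0%nat) (prime_period f) in
       sum_n (Jterm f v) (p - 1)
  else Series (Jterm f v).

From Stdlib Require Import Reals Lra Lia ClassicalEpsilon Classical.
From Coquelicot Require Import Coquelicot.
Open Scope R_scope.

(* Maps f close to f0 in |.|_1 are uniformly expanding, |Df| >= lam > 1 on I, so the i-th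
   term of J(f, v) is at most |v|_oo lam^-i and, uniformly in f and v, J(f, v) is within
   O(lam^-n) of its n-th partial sum; this also holds when c is periodic for f, since its
   period then exceeds n because the first n points of the f0-orbit of c avoid c.  Each
   remaining term depends continuously on f at f0: f^i(c) -> f0^i(c) because f0 is
   continuous, and Df^i(f(c)) -> Df0^i(f0(c)) because Df0 is continuous off c.  For (A),
   v(f^i(c)) - v(f0^i(c)) is controlled by |v|_1 |f^i(c) - f0^i(c)|, as both points lie
   on the same branch of I. *)

Section FilterLimits.

Context {T : Type} {F : (T -> Prop) -> Prop} {FF : Filter F}.

Lemma filterlim_Rabs_iff (h : T -> R) (l : R) :
  filterlim h F (locally l) <->
  forall eps, eps > 0 -> F (fun t => Rabs (h t - l) < eps).
Proof.
  rewrite filterlim_locally. split.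
  - intros H eps Heps. exact (H (mkposreal eps Heps)).
  - intros H [eps Heps]. exact (H eps Heps).
Qed.

Lemma filterlim_Rplus (g h : T -> R) (a b : R) :
  filterlim g F (locally a) -> filterlim h F (locally b) ->
  filterlim (fun t => g t + h t) F (locally (a + b)).
Proof. intros Hg Hh. exact (filterlim_comp_2 _ _ _ Hg Hh (filterlim_plus a b)). Qed.

Lemma filterlim_Rminus (g h : T -> R) (a b : R) :
  filterlim g F (locally a) -> filterlim h F (locally b) ->
  filterlim (fun t => g t - h t) F (locally (a - b)).
Proof.
  intros Hg Hh. apply (filterlim_Rplus g (fun t => - h t)); [exact Hg|].
  eapply filterlim_comp; [exact Hh | exact (filterlim_opp b)].
Qed.

Lemma filterlim_Rmult (g h : T -> R) (a b : R) :
  filterlim g F (locally a) -> filterlim h F (locally b) ->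
  filterlim (fun t => g t * h t) F (locally (a * b)).
Proof.
  intros Hg Hh. exact (filterlim_comp_2 _ _ _ Hg Hh (@filterlim_mult R_AbsRing a b)).
Qed.

Lemma filterlim_Rdiv (g h : T -> R) (a b : R) : b <> 0 ->
  filterlim g F (locally a) -> filterlim h F (locally b) ->
  filterlim (fun t => g t / h t) F (locally (a / b)).
Proof.
  intros Hb Hg Hh. apply filterlim_Rmult; [exact Hg|].
  eapply filterlim_comp; [exact Hh|]. apply (filterlim_Rbar_inv b). congruence.
Qed.

Lemma filterlim_sum_n (a : T -> nat -> R) (l : nat -> R) (n : nat) :
  (forall i, filterlim (fun t => a t i) F (locally (l i))) ->
  filterlim (fun t => sum_n (a t) n) F (locally (sum_n l n)).
Proof.
  intros Ha. induction n as [|n IH].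
  - rewrite sum_O. apply filterlim_ext with (fun t => a t 0%nat); [|apply Ha].
    intros t. now rewrite sum_O.
  - rewrite sum_Sn. apply filterlim_ext with (fun t => sum_n (a t) n + a t (S n)).
    + intros t. now rewrite sum_Sn.
    + now apply filterlim_Rplus.
Qed.

Lemma filter_forall_le (P : nat -> T -> Prop) (n : nat) :
  (forall i, F (P i)) -> F (fun t => forall i, (i <= n)%nat -> P i t).
Proof.
  intros HP. induction n as [|n IH].
  - apply filter_imp with (P 0%nat); [|apply HP].
    intros t H i Hi. now replace i with 0%nat by lia.
  - apply filter_imp with (fun t => (forall i, (i <= n)%nat -> P i t) /\ P (S n) t).
    + intros t [H1 H2] i Hi.
      destruct (Nat.eq_dec i (S n)) as [->|Hne]; [exact H2 | apply H1; lia].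
    + now apply filter_and.
Qed.

Lemma filter_gt0 (h : T -> R) (l : R) :
  filterlim h F (locally l) -> 0 < l -> F (fun t => 0 < h t).
Proof.
  intros Hh Hl. apply filter_imp with (fun t => Rabs (h t - l) < l).
  - intros t Ht. apply Rabs_def2 in Ht. lra.
  - now apply filterlim_Rabs_iff.
Qed.

Lemma filterlim_comp_within (P : R -> Prop) (x : T -> R) (h : R -> R) (y : R) :
  F (fun t => P (x t)) -> filterlim x F (locally y) ->
  filterlim h (within P (locally y)) (locally (h y)) ->
  filterlim (fun t => h (x t)) F (locally (h y)).
Proof.
  intros HP Hx Hh. eapply filterlim_comp; [|exact Hh].
  intros Q HQ. generalize (filter_and _ _ HP (Hx _ HQ)).
  apply filter_imp. intros t [Pt HQt]. exact (HQt Pt).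
Qed.

Lemma filterlim_uniform_comp (P : R -> Prop) (H : T -> R -> R) (h : R -> R) (x : T -> R) (y : R) :
  (forall d, d > 0 -> F (fun t => forall z, P z -> Rabs (H t z - h z) < d)) ->
  F (fun t => P (x t)) -> filterlim x F (locally y) ->
  filterlim h (within P (locally y)) (locally (h y)) ->
  filterlim (fun t => H t (x t)) F (locally (h y)).
Proof.
  intros Hunif HP Hx Hh. apply filterlim_Rabs_iff. intros eps Heps.
  assert (Hhx := proj1 (filterlim_Rabs_iff _ _) (filterlim_comp_within P x h y HP Hx Hh)).
  assert (Hfar := Hunif (eps / 2) ltac:(lra)). assert (Hnear := Hhx (eps / 2) ltac:(lra)).
  generalize (filter_and _ _ (filter_and _ _ HP Hfar) Hnear).
  apply filter_imp. intros t [[Pt Hu] Hc]. specialize (Hu (x t) Pt).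
  replace (H t (x t) - h y) with ((H t (x t) - h (x t)) + (h (x t) - h y)) by ring.
  eapply Rle_lt_trans; [apply Rabs_triang|]. lra.
Qed.

End FilterLimits.

Lemma filterlim_within_iff (P : R -> Prop) (x l : R) (h : R -> R) :
  filterlim h (within P (locally x)) (locally l) <->
  forall eps, eps > 0 -> exists d, d > 0 /\
    forall y, P y -> Rabs (y - x) < d -> Rabs (h y - l) < eps.
Proof.
  rewrite filterlim_Rabs_iff. split.
  - intros H eps Heps. destruct (H eps Heps) as [[d Hd] Hball].
    exists d. split; [exact Hd|]. intros y Py Hy. exact (Hball y Hy Py).
  - intros H eps Heps. destruct (H eps Heps) as [d [Hd Hball]].
    exists (mkposreal d Hd). intros y Hy Py. exact (Hball y Py Hy).
Qed.

Lemma filterlim_within_local (P Q : R -> Prop) (g h : R -> R) (b r : R) : r > 0 ->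
  (forall y, Q y -> Rabs (y - b) < r -> P y /\ h y = g y) -> Q b ->
  filterlim g (within P (locally b)) (locally (g b)) ->
  filterlim h (within Q (locally b)) (locally (h b)).
Proof.
  intros Hr Hloc Qb Hg.
  assert (Hb : h b = g b).
  { apply (Hloc b Qb). rewrite Rminus_eq_0, Rabs_R0. exact Hr. }
  rewrite Hb. rewrite filterlim_within_iff in *. intros eps Heps.
  destruct (Hg eps Heps) as [d [Hd K]].
  exists (Rmin d r). split; [apply Rmin_glb_lt; lra|].
  intros y Qy Hy. pose proof (Rmin_l d r). pose proof (Rmin_r d r).
  destruct (Hloc y Qy ltac:(lra)) as [Py ->]. apply K; [exact Py | lra].
Qed.

Lemma cont_on_glue (a m b : R) (h : R -> R) : a <= m <= b ->
  cont_on a m h -> cont_on m b h -> cont_on a b h.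
Proof.
  intros Hm Hl Hr x Hx. unfold inP in *.
  destruct (Rtotal_order x m) as [Hxm|[->|Hxm]].
  - apply (filterlim_within_local (inP a m) _ h h x (m - x)); [lra| |exact Hx|].
    + intros y Hy Hyx. apply Rabs_def2 in Hyx. unfold inP in *. split; [lra | reflexivity].
    + apply Hl. unfold inP. lra.
  - apply filterlim_within_iff. intros eps Heps.
    destruct (proj1 (filterlim_within_iff _ _ _ _) (Hl m ltac:(unfold inP; lra)) eps Heps)
      as [d1 [Hd1 K1]].
    destruct (proj1 (filterlim_within_iff _ _ _ _) (Hr m ltac:(unfold inP; lra)) eps Heps)
      as [d2 [Hd2 K2]].
    exists (Rmin d1 d2). split; [apply Rmin_glb_lt; lra|].
    intros y Hy Hym. pose proof (Rmin_l d1 d2). pose proof (Rmin_r d1 d2). unfold inP in Hy.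
    destruct (Rle_dec y m); [apply K1 | apply K2]; unfold inP; lra.
  - apply (filterlim_within_local (inP m b) _ h h x (x - m)); [lra| |exact Hx|].
    + intros y Hy Hyx. apply Rabs_def2 in Hyx. unfold inP in *. split; [lra | reflexivity].
    + apply Hr. unfold inP. lra.
Qed.

Lemma punctured_interval_proper (a b x : R) : a < b -> inP a b x ->
  ProperFilter' (within (fun y => inP a b y /\ y <> x) (locally x)).
Proof.
  intros Hab [Hax Hxb]. constructor; [|apply within_filter, locally_filter].
  intros [d Hd]. set (r := Rmin d (b - a) / 2).
  assert (Hr : 0 < r /\ r < d /\ 2 * r <= b - a).
  { pose proof (Rmin_l d (b - a)). pose proof (Rmin_r d (b - a)).
    assert (0 < Rmin d (b - a)) by (apply Rmin_glb_lt; [apply cond_pos | lra]).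
    unfold r. lra. }
  destruct (Rle_dec (x + r) b).
  - apply (Hd (x + r)); [|split; [unfold inP; lra | lra]].
    change (Rabs (x + r - x) < d). rewrite Rabs_pos_eq; lra.
  - apply (Hd (x - r)); [|split; [unfold inP; lra | lra]].
    change (Rabs (x - r - x) < d). rewrite Rabs_left; lra.
Qed.

Lemma pderiv_eq (a b : R) (f g : R -> R) (x : R) :
  a < b -> is_pderiv a b f g -> inP a b x -> pderiv a b f x = g x.
Proof.
  intros Hab Hd Hx. unfold pderiv.
  apply (@filterlim_locally_unique _ _ _ _ (punctured_interval_proper a b x Hab Hx)
           (fun y => (f y - f x) / (y - x))).
  - apply epsilon_spec. exists (g x). now apply Hd.
  - now apply Hd.
Qed.

Lemma C1_on_pderiv_cont (a b : R) (f : R -> R) :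
  a < b -> C1_on a b f -> cont_on a b (pderiv a b f).
Proof.
  intros Hab [_ [g [Hd Hg]]] x Hx. rewrite (pderiv_eq a b f g x Hab Hd Hx).
  apply filterlim_within_ext with g; [|exact (Hg x Hx)].
  intros y Hy. symmetry. now apply pderiv_eq.
Qed.

Lemma C1_on_minus (a b : R) (f h : R -> R) : a < b -> C1_on a b f -> C1_on a b h ->
  C1_on a b (fun x => f x - h x) /\
  forall x, inP a b x ->
    pderiv a b (fun x => f x - h x) x = pderiv a b f x - pderiv a b h x.
Proof.
  intros Hab [Cf [gf [Df Gf]]] [Ch [gh [Dh Gh]]].
  assert (Dfh : is_pderiv a b (fun x => f x - h x) (fun x => gf x - gh x)).
  { intros x Hx.
    eapply filterlim_within_ext; [|apply filterlim_Rminus; [apply Df | apply Dh]; exact Hx].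
    intros y [_ Hy]. field. intro E. apply Hy. lra. }
  split.
  - split; [intros x Hx; apply filterlim_Rminus; [apply Cf | apply Ch]; exact Hx|].
    exists (fun x => gf x - gh x). split; [exact Dfh|].
    intros x Hx. apply filterlim_Rminus; [apply Gf | apply Gh]; exact Hx.
  - intros x Hx. now rewrite (pderiv_eq _ _ _ _ x Hab Dfh Hx),
      (pderiv_eq _ _ _ _ x Hab Df Hx), (pderiv_eq _ _ _ _ x Hab Dh Hx).
Qed.

(* [fun t => g (clamp a b t)] extends [g] from [a, b] to a function continuous on all of R,
   so that the Stdlib theorems about such functions apply. *)
Definition clamp (a b x : R) : R := Rmax a (Rmin b x).

Lemma clamp_id (a b x : R) : inP a b x -> clamp a b x = x.
Proof. unfold clamp, inP. intros. rewrite Rmin_right by lra. rewrite Rmax_right; lra. Qed.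

Lemma clamp_in (a b x : R) : a <= b -> inP a b (clamp a b x).
Proof. unfold clamp, inP. intros. split; [apply Rmax_l|]. apply Rmax_lub; [lra | apply Rmin_l]. Qed.

Lemma clamp_dist (a b x y : R) : a <= b -> Rabs (clamp a b x - clamp a b y) <= Rabs (x - y).
Proof.
  unfold clamp, Rmax, Rmin. intros.
  repeat destruct Rle_dec; unfold Rabs; repeat destruct Rcase_abs; lra.
Qed.

Lemma continuity_pt_clamp (a b : R) (g : R -> R) (x : R) : a <= b -> cont_on a b g -> inP a b x ->
  continuity_pt (fun t => g (clamp a b t)) x.
Proof.
  intros Hab Hg Hx eps Heps.
  destruct (proj1 (filterlim_within_iff _ _ _ _) (Hg x Hx) eps Heps) as [d [Hd K]].
  exists d. split; [exact Hd|]. intros y [_ Hy]. simpl in *. unfold R_dist in *.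
  rewrite (clamp_id a b x Hx). apply K; [now apply clamp_in|].
  rewrite <- (clamp_id a b x Hx) at 1. eapply Rle_lt_trans; [apply clamp_dist|]; assumption.
Qed.

Lemma cont_on_bounded (a b : R) (g : R -> R) : a <= b -> cont_on a b g ->
  exists M, forall x, inP a b x -> Rabs (g x) <= M.
Proof.
  intros Hab Hg.
  destruct (continuity_ab_maj (fun t => Rabs (g (clamp a b t))) a b Hab) as [m [Hm _]].
  { intros c Hc. apply (continuity_pt_comp (fun t => g (clamp a b t)) Rabs).
    - now apply continuity_pt_clamp.
    - apply Rcontinuity_abs. }
  exists (Rabs (g (clamp a b m))). intros x Hx. specialize (Hm x Hx). cbv beta in Hm.
  now rewrite clamp_id in Hm.
Qed.

Lemma is_pderiv_is_derive (a b : R) (f g : R -> R) (c : R) :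
  is_pderiv a b f g -> a < c < b -> is_derive f c (g c).
Proof.
  intros Hd Hc. apply is_derive_Reals. intros eps Heps.
  assert (Pc : inP a b c) by (unfold inP; lra).
  destruct (proj1 (filterlim_within_iff _ _ _ _) (Hd c Pc) eps Heps) as [d [Hd0 K]].
  set (r := Rmin d (Rmin (c - a) (b - c))).
  assert (Hr : 0 < r /\ r <= d /\ r <= c - a /\ r <= b - c).
  { pose proof (Rmin_l d (Rmin (c - a) (b - c))). pose proof (Rmin_r d (Rmin (c - a) (b - c))).
    pose proof (Rmin_l (c - a) (b - c)). pose proof (Rmin_r (c - a) (b - c)).
    assert (0 < r) by (apply Rmin_glb_lt; [lra | apply Rmin_glb_lt; lra]). unfold r in *. lra. }
  exists (mkposreal r (proj1 Hr)). intros h Hh0 Hh. simpl in Hh. apply Rabs_def2 in Hh.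
  replace ((f (c + h) - f c) / h) with ((f (c + h) - f c) / (c + h - c)) by (f_equal; ring).
  apply K.
  - split; [unfold inP; lra | intro E; apply Hh0; lra].
  - replace (c + h - c) with h by ring. apply Rabs_def1; lra.
Qed.

Lemma C1_on_mvt (a b : R) (f : R -> R) (x y : R) : a < b -> C1_on a b f ->
  inP a b x -> inP a b y -> x <= y ->
  exists c, inP a b c /\ f y - f x = pderiv a b f c * (y - x).
Proof.
  intros Hab [Hf [g [Hd Hg]]] Hx Hy Hxy. unfold inP in Hx, Hy.
  destruct (MVT_gen (fun t => f (clamp a b t)) x y g) as [c [Hc Hfc]].
  - rewrite Rmin_left, Rmax_right by lra. intros c Hc.
    apply is_derive_ext_loc with f; [|apply (is_pderiv_is_derive a b); [exact Hd | lra]].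
    assert (Hr : 0 < Rmin (c - a) (b - c)) by (apply Rmin_glb_lt; lra).
    exists (mkposreal _ Hr). intros t Ht. change (Rabs (t - c) < Rmin (c - a) (b - c)) in Ht.
    pose proof (Rmin_l (c - a) (b - c)). pose proof (Rmin_r (c - a) (b - c)).
    apply Rabs_def2 in Ht. symmetry. apply f_equal, clamp_id. unfold inP. lra.
  - rewrite Rmin_left, Rmax_right by lra. intros c Hc.
    apply continuity_pt_clamp; [lra | exact Hf | unfold inP; lra].
  - rewrite Rmin_left, Rmax_right in Hc by lra.
    assert (Pc : inP a b c) by (unfold inP; lra).
    exists c. split; [exact Pc|]. rewrite (pderiv_eq a b f g c Hab Hd Pc).
    now rewrite !clamp_id in Hfc by (unfold inP; lra).
Qed.

Lemma sup_abs_ge (P : R -> Prop) (h : R -> R) (M x : R) :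
  (forall y, P y -> Rabs (h y) <= M) -> P x -> Rabs (h x) <= sup_abs P h.
Proof.
  intros HM Hx. unfold sup_abs.
  destruct (Lub_Rbar_correct (fun r => exists x, P x /\ r = Rabs (h x))) as [Hub Hlub].
  assert (H1 : Rbar_le (Rabs (h x)) (Lub_Rbar (fun r => exists x, P x /\ r = Rabs (h x))))
    by (apply Hub; now exists x).
  assert (H2 : Rbar_le (Lub_Rbar (fun r => exists x, P x /\ r = Rabs (h x))) M).
  { apply Hlub. intros r [y [Py ->]]. now apply HM. }
  destruct (Lub_Rbar (fun r => exists x, P x /\ r = Rabs (h x))); simpl in *; tauto.
Qed.

Section C1Bounds.

Variables (a b : R) (f : R -> R).
Hypotheses (Hab : a < b) (Hf : C1_on a b f).

Lemma C1_on_abs_le_normC1 (x : R) : inP a b x -> Rabs (f x) <= normC1 a b f.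
Proof.
  intros Hx. destruct (cont_on_bounded a b f ltac:(lra) (proj1 Hf)) as [M HM].
  eapply Rle_trans; [|apply Rmax_l]. now apply (sup_abs_ge _ _ M).
Qed.

Lemma C1_on_abs_pderiv_le_normC1 (x : R) : inP a b x -> Rabs (pderiv a b f x) <= normC1 a b f.
Proof.
  intros Hx.
  destruct (cont_on_bounded a b _ ltac:(lra) (C1_on_pderiv_cont a b f Hab Hf)) as [M HM].
  eapply Rle_trans; [|apply Rmax_r]. now apply (sup_abs_ge _ _ M).
Qed.

Lemma C1_on_lipschitz (x y : R) : inP a b x -> inP a b y ->
  Rabs (f x - f y) <= normC1 a b f * Rabs (x - y).
Proof.
  assert (Hle : forall x y, inP a b x -> inP a b y -> x <= y ->
            Rabs (f y - f x) <= normC1 a b f * Rabs (y - x)).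
  { intros u v Hu Hv Huv. destruct (C1_on_mvt a b f u v Hab Hf Hu Hv Huv) as [c [Pc ->]].
    rewrite Rabs_mult. apply Rmult_le_compat_r; [apply Rabs_pos|].
    now apply C1_on_abs_pderiv_le_normC1. }
  intros Hx Hy. destruct (Rle_dec x y).
  - rewrite (Rabs_minus_sym (f x)), (Rabs_minus_sym x). now apply Hle.
  - apply Hle; [exact Hy | exact Hx | lra].
Qed.

End C1Bounds.

Lemma C1_on_close (a b : R) (f h : R -> R) (d x : R) : a < b -> C1_on a b f -> C1_on a b h ->
  normC1 a b (fun x => f x - h x) < d -> inP a b x ->
  Rabs (f x - h x) < d /\ Rabs (pderiv a b f x - pderiv a b h x) < d.
Proof.
  intros Hab Hf Hh Hn Hx. destruct (C1_on_minus a b f h Hab Hf Hh) as [Hfh Dfh]. split.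
  - eapply Rle_lt_trans; [apply (C1_on_abs_le_normC1 a b _ Hab Hfh x Hx) | exact Hn].
  - rewrite <- (Dfh x Hx).
    eapply Rle_lt_trans; [apply (C1_on_abs_pderiv_le_normC1 a b _ Hab Hfh x Hx) | exact Hn].
Qed.

Lemma Df_left (f : R -> R) (x : R) : inP (-1) 0 x -> Df f x = pderiv (-1) 0 f x.
Proof. intros [_ Hx]. unfold Df. destruct (Rle_dec x 0); [reflexivity | lra]. Qed.

Lemma Df_right (f : R -> R) (x : R) : 0 < x -> Df f x = pderiv 0 1 f x.
Proof. intros Hx. unfold Df. destruct (Rle_dec x 0); [lra | reflexivity]. Qed.

Lemma U1_maps_I (f : R -> R) (x : R) : U1 f -> inI x -> inI (f x).
Proof.
  intros [[Cl [Cr _]] [Hm1 [Hp1 [[l1 [Hl1 L1]] [[l2 [Hl2 L2]] H0]]]]] Hx. unfold inI in *.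
  destruct (Rle_dec x 0).
  - assert (Px : inP (-1) 0 x) by (unfold inP; lra).
    destruct (C1_on_mvt (-1) 0 f (-1) x ltac:(lra) Cl ltac:(unfold inP; lra) Px ltac:(lra))
      as [c [Pc Ec]].
    destruct (C1_on_mvt (-1) 0 f x 0 ltac:(lra) Cl Px ltac:(unfold inP; lra) ltac:(lra))
      as [c' [Pc' Ec']].
    pose proof (L1 c Pc). pose proof (L1 c' Pc'). nra.
  - assert (Px : inP 0 1 x) by (unfold inP; lra).
    destruct (C1_on_mvt 0 1 f x 1 ltac:(lra) Cr Px ltac:(unfold inP; lra) ltac:(lra))
      as [c [Pc Ec]].
    destruct (C1_on_mvt 0 1 f 0 x ltac:(lra) Cr ltac:(unfold inP; lra) Px ltac:(lra))
      as [c' [Pc' Ec']].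
    pose proof (L2 c Pc). pose proof (L2 c' Pc'). nra.
Qed.

Lemma iter_in_I (f : R -> R) (n : nat) (x : R) : U1 f -> inI x -> inI (iter f n x).
Proof. intros Uf Hx. induction n as [|n IH]; [exact Hx | simpl; now apply U1_maps_I]. Qed.

Lemma iter_succ (f : R -> R) (n : nat) (x : R) : iter f n (f x) = iter f (S n) x.
Proof. induction n as [|n IH]; [reflexivity | simpl; now rewrite IH]. Qed.

Lemma U1_cont_on_I (f : R -> R) : U1 f -> cont_on (-1) 1 f.
Proof.
  intros [[[Cl _] [[Cr _] _]] _]. apply (cont_on_glue (-1) 0 1); [lra | exact Cl | exact Cr].
Qed.

Lemma U1_Df_cont (f : R -> R) (b : R) : U1 f -> inI b -> b <> 0 ->
  filterlim (Df f) (within inI (locally b)) (locally (Df f b)).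
Proof.
  intros [[Cl [Cr _]] _] Hb Hb0. unfold inI in Hb. destruct (Rlt_dec b 0).
  - apply (filterlim_within_local (inP (-1) 0) _ (pderiv (-1) 0 f) _ b (- b)); [lra| |exact Hb|].
    + intros y Hy Hyb. apply Rabs_def2 in Hyb. unfold inI in Hy.
      assert (Py : inP (-1) 0 y) by (unfold inP; lra). split; [exact Py | now apply Df_left].
    + apply (C1_on_pderiv_cont (-1) 0 f); [lra | exact Cl | unfold inP; lra].
  - apply (filterlim_within_local (inP 0 1) _ (pderiv 0 1 f) _ b b); [lra| |exact Hb|].
    + intros y Hy Hyb. apply Rabs_def2 in Hyb. unfold inI in Hy.
      split; [unfold inP; lra | apply Df_right; lra].
    + apply (C1_on_pderiv_cont 0 1 f); [lra | exact Cr | unfold inP; lra].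
Qed.

Lemma U1_close (f f0 : R -> R) (d x : R) : U1 f -> U1 f0 ->
  norm1 (fun x => f x - f0 x) < d -> inI x ->
  Rabs (f x - f0 x) < d /\ Rabs (Df f x - Df f0 x) < d.
Proof.
  intros [[Cl [Cr _]] _] [[Cl0 [Cr0 _]] _] Hn Hx. unfold norm1 in Hn. unfold inI in Hx.
  destruct (Rle_dec x 0).
  - rewrite !Df_left by (unfold inP; lra).
    apply C1_on_close; [lra | exact Cl | exact Cl0 | | unfold inP; lra].
    eapply Rle_lt_trans; [apply Rmax_l | exact Hn].
  - rewrite !Df_right by lra.
    apply C1_on_close; [lra | exact Cr | exact Cr0 | | unfold inP; lra].
    eapply Rle_lt_trans; [apply Rmax_r | exact Hn].
Qed.

Definition expanding (lam : R) (f : R -> R) : Prop :=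
  forall x, inI x -> lam <= Rabs (Df f x).

Lemma U1_expanding (f : R -> R) : U1 f -> exists lam, 1 < lam /\ expanding lam f.
Proof.
  intros [_ [_ [_ [[l1 [Hl1 L1]] [[l2 [Hl2 L2]] _]]]]].
  exists (Rmin l1 (- l2)). split; [apply Rmin_glb_lt; lra|].
  pose proof (Rmin_l l1 (- l2)). pose proof (Rmin_r l1 (- l2)).
  intros x Hx. unfold inI in Hx. destruct (Rle_dec x 0).
  - rewrite Df_left by (unfold inP; lra). specialize (L1 x ltac:(unfold inP; lra)).
    rewrite Rabs_pos_eq; lra.
  - rewrite Df_right by lra. specialize (L2 x ltac:(unfold inP; lra)).
    rewrite Rabs_left; lra.
Qed.

Lemma expanding_Dfn (f : R -> R) (lam y : R) (n : nat) : U1 f -> 0 <= lam -> expanding lam f ->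
  inI y -> lam ^ n <= Rabs (Dfn f n y).
Proof.
  intros Uf Hlam Hexp Hy. induction n as [|n IH]; simpl.
  - rewrite Rabs_R1. lra.
  - rewrite Rabs_mult. rewrite Rmult_comm.
    apply Rmult_le_compat; [apply pow_le; lra | lra | exact IH |].
    apply Hexp, iter_in_I; assumption.
Qed.

Lemma expanding_Dfn_ge1 (f : R -> R) (lam : R) (n : nat) : U1 f -> 1 <= lam -> expanding lam f ->
  1 <= Rabs (Dfn f n (f 0)).
Proof.
  intros Uf Hlam Hexp. eapply Rle_trans; [apply (pow_R1_Rle lam n Hlam)|].
  apply expanding_Dfn; [exact Uf | lra | exact Hexp |].
  apply U1_maps_I; [exact Uf | unfold inI; lra].
Qed.

Lemma Jterm_abs_le (f v : R -> R) (lam C : R) (i : nat) : U1 f -> 1 <= lam -> expanding lam f ->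
  (forall x, inI x -> Rabs (v x) <= C) -> Rabs (Jterm f v i) <= C * (/ lam) ^ i.
Proof.
  intros Uf Hlam Hexp Hv.
  assert (I0 : inI 0) by (unfold inI; lra).
  assert (HD := expanding_Dfn f lam (f 0) i Uf ltac:(lra) Hexp (U1_maps_I f 0 Uf I0)).
  assert (Hpow : 0 < lam ^ i) by (apply pow_lt; lra).
  unfold Jterm, Rdiv. rewrite Rabs_mult, Rabs_inv, pow_inv.
  apply Rmult_le_compat; [apply Rabs_pos | left; apply Rinv_0_lt_compat; lra | |].
  - apply Hv, iter_in_I; assumption.
  - now apply Rinv_le_contravar.
Qed.

Section GeometricTail.

Variables (a : nat -> R) (C mu : R).
Hypotheses (Hmu : 0 <= mu < 1) (Ha : forall i, Rabs (a i) <= C * mu ^ i).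

Lemma sum_n_tail_le (n m : nat) : (n <= m)%nat ->
  Rabs (sum_n a m - sum_n a n) <= C * mu ^ S n / (1 - mu).
Proof.
  assert (HC : 0 <= C).
  { specialize (Ha 0%nat). rewrite pow_O, Rmult_1_r in Ha. pose proof (Rabs_pos (a 0%nat)). lra. }
  assert (Hk : forall k, Rabs (sum_n a (n + k) - sum_n a n) <=
                         C * (mu ^ S n - mu ^ S (n + k)) / (1 - mu)).
  { induction k as [|k IH].
    - rewrite Nat.add_0_r, !Rminus_eq_0, Rabs_R0. unfold Rdiv. lra.
    - rewrite Nat.add_succ_r, sum_Sn. change (plus ?x ?y) with (x + y).
      replace (sum_n a (n + k) + a (S (n + k)) - sum_n a n)
        with ((sum_n a (n + k) - sum_n a n) + a (S (n + k))) by ring.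
      eapply Rle_trans; [apply Rabs_triang|].
      eapply Rle_trans; [apply Rplus_le_compat; [exact IH | apply Ha]|].
      right. simpl. field. lra. }
  intros Hnm. replace m with (n + (m - n))%nat by lia.
  eapply Rle_trans; [apply Hk|]. unfold Rdiv. apply Rmult_le_compat_r.
  - left. apply Rinv_0_lt_compat. lra.
  - assert (0 <= mu ^ S (n + (m - n))) by (apply pow_le; lra). nra.
Qed.

Lemma Series_tail_le (n : nat) : Rabs (Series a - sum_n a n) <= C * mu ^ S n / (1 - mu).
Proof.
  assert (Hex : ex_series a).
  { apply (@ex_series_le R_AbsRing R_CompleteNormedModule a (fun i => C * mu ^ i)); [exact Ha|].
    apply (ex_series_scal_l C (fun i => mu ^ i)), ex_series_geom. rewrite Rabs_pos_eq; lra. }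
  assert (Hlim : is_lim_seq (fun m => Rabs (sum_n a m - sum_n a n)) (Rabs (Series a - sum_n a n))).
  { apply (is_lim_seq_abs _ (Series a - sum_n a n)), is_lim_seq_minus'.
    - apply Series_correct, Hex.
    - apply is_lim_seq_const. }
  refine (is_lim_seq_le_loc _ (fun _ => C * mu ^ S n / (1 - mu)) _ _ _ Hlim (is_lim_seq_const _)).
  exists n. intros m Hm. now apply sum_n_tail_le.
Qed.

End GeometricTail.

Lemma prime_period_exists (f : R -> R) : c_periodic f -> exists p, prime_period f p.
Proof.
  intros [n [Hn E]]. revert Hn E.
  induction n as [n IH] using (well_founded_induction Wf_nat.lt_wf). intros Hn E.
  destruct (classic (exists q, (1 <= q < n)%nat /\ iter f q 0 = 0)) as [[q [Hq Eq]]|Hno].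
  - apply (IH q); [lia | lia | exact Eq].
  - exists n. split; [exact Hn|]. split; [exact E|]. intros q Hq Eq. apply Hno. now exists q.
Qed.

Lemma J_minus_sum_n_le (f v : R -> R) (lam C : R) (n : nat) :
  U1 f -> 1 < lam -> expanding lam f -> (forall x, inI x -> Rabs (v x) <= C) ->
  (forall q, (1 <= q <= n)%nat -> iter f q 0 <> 0) ->
  Rabs (J f v - sum_n (Jterm f v) n) <= C * (/ lam) ^ S n / (1 - / lam).
Proof.
  intros Uf Hlam Hexp Hv Hq.
  assert (Hmu : 0 <= / lam < 1).
  { split; [left; apply Rinv_0_lt_compat; lra|].
    rewrite <- Rinv_1. apply Rinv_lt_contravar; lra. }
  assert (Ha := fun i => Jterm_abs_le f v lam C i Uf ltac:(lra) Hexp Hv).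
  unfold J. destruct (excluded_middle_informative (c_periodic f)) as [Hper|_].
  - cbv zeta. set (p := epsilon (inhabits 0%nat) (prime_period f)).
    assert (Hp : prime_period f p) by (apply epsilon_spec, prime_period_exists, Hper).
    destruct Hp as [Hp1 [Hp0 _]].
    assert (Hnp : (n < p)%nat).
    { destruct (Nat.lt_ge_cases n p) as [Hlt|Hge]; [exact Hlt|].
      exfalso. apply (Hq p); [lia | exact Hp0]. }
    apply (sum_n_tail_le _ C (/ lam)); [exact Hmu | exact Ha | lia].
  - now apply Series_tail_le.
Qed.

(* Neighbourhoods of f0 in U^1 for |.|_1: both conclusions of the theorem are [near_U1 f0 _]. *)
Definition near_U1 (f0 : R -> R) (P : (R -> R) -> Prop) : Prop :=
  exists d, d > 0 /\ forall f, U1 f -> norm1 (fun x => f x - f0 x) < d -> P f.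

Global Instance near_U1_filter (f0 : R -> R) : Filter (near_U1 f0).
Proof.
  constructor.
  - exists 1. split; [lra | auto].
  - intros P Q [d1 [Hd1 HP]] [d2 [Hd2 HQ]]. exists (Rmin d1 d2).
    split; [apply Rmin_glb_lt; lra|]. intros f Uf Hf.
    pose proof (Rmin_l d1 d2). pose proof (Rmin_r d1 d2).
    split; [apply HP | apply HQ]; auto; lra.
  - intros P Q HPQ [d [Hd HP]]. exists d. split; auto.
Qed.

Lemma near_U1_U1 (f0 : R -> R) : near_U1 f0 U1.
Proof. exists 1. split; auto; lra. Qed.

Lemma near_U1_iter_in_I (f0 : R -> R) (i : nat) : near_U1 f0 (fun f => inI (iter f i 0)).
Proof. exists 1. split; [lra|]. intros f Uf _. apply iter_in_I; [exact Uf | unfold inI; lra]. Qed.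

Lemma Rabs_sum_n_minus_le (a b w : nat -> R) (n : nat) :
  (forall i, (i <= n)%nat -> Rabs (a i - b i) <= w i) ->
  Rabs (sum_n a n - sum_n b n) <= sum_n w n.
Proof.
  intros H. induction n as [|n IH].
  - rewrite !sum_O. apply H. lia.
  - rewrite !sum_Sn. change (Rabs ((sum_n a n + a (S n)) - (sum_n b n + b (S n))) <=
                             sum_n w n + w (S n)).
    replace ((sum_n a n + a (S n)) - (sum_n b n + b (S n)))
      with ((sum_n a n - sum_n b n) + (a (S n) - b (S n))) by ring.
    eapply Rle_trans; [apply Rabs_triang|].
    apply Rplus_le_compat; [apply IH; intros i Hi; apply H; lia | apply H; lia].
Qed.

Lemma Rabs_div_minus_le (x y A B : R) : 1 <= Rabs A -> 1 <= Rabs B ->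
  Rabs (x / A - y / B) <= Rabs (x - y) + Rabs y * Rabs (A - B).
Proof.
  intros HA HB.
  assert (A0 : A <> 0) by (intro E; rewrite E, Rabs_R0 in HA; lra).
  assert (B0 : B <> 0) by (intro E; rewrite E, Rabs_R0 in HB; lra).
  replace (x / A - y / B) with ((x - y) / A + (y * (A - B)) / - (A * B)) by (field; auto).
  eapply Rle_trans; [apply Rabs_triang|].
  unfold Rdiv. rewrite !Rabs_mult, Rabs_inv, Rabs_inv, Rabs_Ropp, Rabs_mult.
  assert (IA : / Rabs A <= 1) by (rewrite <- Rinv_1; apply Rinv_le_contravar; lra).
  assert (IAB : / (Rabs A * Rabs B) <= 1) by (rewrite <- Rinv_1; apply Rinv_le_contravar; nra).
  assert (0 <= Rabs (x - y)) by apply Rabs_pos.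
  assert (0 <= Rabs y * Rabs (A - B)) by (apply Rmult_le_pos; apply Rabs_pos).
  apply Rplus_le_compat; nra.
Qed.

Lemma Bk1_abs_le_norm1 (v : R -> R) (x : R) : Bk1 v -> inI x -> Rabs (v x) <= norm1 v.
Proof.
  intros [Cl [Cr _]] Hx. unfold inI in Hx. destruct (Rle_dec x 0).
  - eapply Rle_trans; [apply (C1_on_abs_le_normC1 (-1) 0); [lra | exact Cl | unfold inP; lra]|].
    apply Rmax_l.
  - eapply Rle_trans; [apply (C1_on_abs_le_normC1 0 1); [lra | exact Cr | unfold inP; lra]|].
    apply Rmax_r.
Qed.

(* [0 <= a * b] says that a and b lie on a common branch [-1, 0] or [0, 1]. *)
Lemma Bk1_lipschitz (v : R -> R) (a b : R) : Bk1 v -> inI a -> inI b -> 0 <= a * b ->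
  Rabs (v a - v b) <= norm1 v * Rabs (a - b).
Proof.
  intros [Cl [Cr _]] Ha Hb Hab. unfold inI in *.
  assert (Hs : (a <= 0 /\ b <= 0) \/ (0 <= a /\ 0 <= b)).
  { destruct (Rle_dec a 0); destruct (Rle_dec b 0); [left | | | right]; nra. }
  destruct Hs as [[Ha0 Hb0]|[Ha0 Hb0]].
  - eapply Rle_trans; [apply (C1_on_lipschitz (-1) 0); [lra | exact Cl | unfold inP; lra ..]|].
    apply Rmult_le_compat_r; [apply Rabs_pos | apply Rmax_l].
  - eapply Rle_trans; [apply (C1_on_lipschitz 0 1); [lra | exact Cr | unfold inP; lra ..]|].
    apply Rmult_le_compat_r; [apply Rabs_pos | apply Rmax_r].
Qed.

Lemma Jterm_minus_le (f f0 v : R -> R) (i : nat) : U1 f -> U1 f0 -> Bk1 v ->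
  1 <= Rabs (Dfn f i (f 0)) -> 1 <= Rabs (Dfn f0 i (f0 0)) ->
  0 <= iter f i 0 * iter f0 i 0 ->
  Rabs (Jterm f v i - Jterm f0 v i) <=
  norm1 v * (Rabs (iter f i 0 - iter f0 i 0) + Rabs (Dfn f i (f 0) - Dfn f0 i (f0 0))).
Proof.
  intros Uf U0 Hv HD HD0 Hside.
  assert (I0 : inI 0) by (unfold inI; lra).
  assert (Ix := iter_in_I f i 0 Uf I0). assert (Iy := iter_in_I f0 i 0 U0 I0).
  unfold Jterm. eapply Rle_trans; [now apply Rabs_div_minus_le|].
  rewrite Rmult_plus_distr_l. apply Rplus_le_compat; [now apply Bk1_lipschitz|].
  apply Rmult_le_compat_r; [apply Rabs_pos | now apply Bk1_abs_le_norm1].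
Qed.

Lemma pow_lt_eps (mu e : R) : 0 <= mu < 1 -> e > 0 -> exists n, mu ^ S n < e.
Proof.
  intros Hmu He. destruct (pow_lt_1_zero mu ltac:(rewrite Rabs_pos_eq; lra) e He) as [N HN].
  exists N. specialize (HN (S N) ltac:(lia)). rewrite Rabs_pos_eq in HN; [exact HN|].
  apply pow_le. lra.
Qed.

Section Perturbation.

Variable f0 : R -> R.
Hypotheses (U0 : U1 f0) (NP : ~ c_periodic f0).

Lemma iter_f0_neq0 (i : nat) : (1 <= i)%nat -> iter f0 i 0 <> 0.
Proof. intros Hi E. apply NP. now exists i. Qed.

Lemma near_U1_close (d : R) : d > 0 ->
  near_U1 f0 (fun f => forall x, inI x -> Rabs (f x - f0 x) < d /\ Rabs (Df f x - Df f0 x) < d).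
Proof. intros Hd. exists d. split; [exact Hd|]. intros f Uf Hf x Hx. now apply U1_close. Qed.

Lemma filterlim_iter (i : nat) :
  filterlim (fun f => iter f i 0) (near_U1 f0) (locally (iter f0 i 0)).
Proof.
  induction i as [|i IH]; [exact (filterlim_const (F := near_U1 f0) _)|].
  apply (filterlim_uniform_comp inI (fun f => f) f0 (fun f => iter f i 0)).
  - intros d Hd. eapply filter_imp; [|exact (near_U1_close d Hd)].
    intros f Hf x Hx. exact (proj1 (Hf x Hx)).
  - apply near_U1_iter_in_I.
  - exact IH.
  - apply U1_cont_on_I; [exact U0 | apply iter_in_I; [exact U0 | unfold inI; lra]].
Qed.

Lemma filterlim_Df_iter (i : nat) : (1 <= i)%nat ->
  filterlim (fun f => Df f (iter f i 0)) (near_U1 f0) (locally (Df f0 (iter f0 i 0))).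
Proof.
  intros Hi. apply (filterlim_uniform_comp inI Df (Df f0) (fun f => iter f i 0)).
  - intros d Hd. eapply filter_imp; [|exact (near_U1_close d Hd)].
    intros f Hf x Hx. exact (proj2 (Hf x Hx)).
  - apply near_U1_iter_in_I.
  - apply filterlim_iter.
  - apply U1_Df_cont; [exact U0 | | now apply iter_f0_neq0].
    apply iter_in_I; [exact U0 | unfold inI; lra].
Qed.

Lemma filterlim_Dfn (i : nat) :
  filterlim (fun f => Dfn f i (f 0)) (near_U1 f0) (locally (Dfn f0 i (f0 0))).
Proof.
  induction i as [|i IH]; [exact (filterlim_const (F := near_U1 f0) _)|].
  apply filterlim_ext with (fun f => Dfn f i (f 0) * Df f (iter f (S i) 0)).
  { intros f. simpl. now rewrite iter_succ. }
  simpl. rewrite iter_succ. apply filterlim_Rmult; [exact IH | apply filterlim_Df_iter; lia].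
Qed.

Lemma near_U1_iter_same_side (i : nat) : (1 <= i)%nat ->
  near_U1 f0 (fun f => 0 < iter f i 0 * iter f0 i 0).
Proof.
  intros Hi. apply (filter_gt0 _ (iter f0 i 0 * iter f0 i 0)).
  - apply filterlim_Rmult; [apply filterlim_iter | apply filterlim_const].
  - assert (iter f0 i 0 <> 0) by now apply iter_f0_neq0. nra.
Qed.

Lemma near_U1_expanding : exists lam, 1 < lam /\ expanding lam f0 /\ near_U1 f0 (expanding lam).
Proof.
  destruct (U1_expanding f0 U0) as [l0 [Hl0 E0]].
  exists ((l0 + 1) / 2). split; [lra|]. split.
  - intros x Hx. specialize (E0 x Hx). lra.
  - eapply filter_imp; [|exact (near_U1_close ((l0 - 1) / 2) ltac:(lra))].
    intros f Hf x Hx. destruct (Hf x Hx) as [_ HD]. specialize (E0 x Hx).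
    pose proof (Rabs_triang_inv (Df f0 x) (Df f x)). rewrite Rabs_minus_sym in HD. lra.
Qed.

Lemma near_U1_J_minus_le (e : R) : e > 0 -> exists n,
  near_U1 f0 (fun f => forall v C, (forall x, inI x -> Rabs (v x) <= C) ->
    Rabs (J f v - J f0 v) <= C * e + Rabs (sum_n (Jterm f v) n - sum_n (Jterm f0 v) n)).
Proof.
  intros He. destruct near_U1_expanding as [lam [Hlam [E0 Enear]]].
  set (mu := / lam).
  assert (Hmu : 0 < mu < 1).
  { unfold mu. split; [apply Rinv_0_lt_compat; lra|].
    rewrite <- Rinv_1. apply Rinv_lt_contravar; lra. }
  destruct (pow_lt_eps mu (e * (1 - mu) / 2)) as [n Hn]; [lra | apply Rdiv_lt_0_compat; nra |].
  assert (Htail : mu ^ S n / (1 - mu) <= e / 2).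
  { apply Rle_div_l; [lra|]. lra. }
  exists n.
  assert (Hnz : near_U1 f0 (fun f => forall q, (q <= n)%nat -> (1 <= q)%nat -> iter f q 0 <> 0)).
  { apply filter_forall_le. intros [|q].
    - apply filter_forall. intros f Hq. lia.
    - eapply filter_imp; [|apply (near_U1_iter_same_side (S q)); lia].
      intros f Hpos _ E. cbv beta in Hpos. rewrite E, Rmult_0_l in Hpos. lra. }
  generalize (filter_and _ _ (filter_and _ _ Enear Hnz) (near_U1_U1 f0)). apply filter_imp.
  intros f [[Ef Hf] Uf] v C Hv.
  assert (HC : 0 <= C).
  { pose proof (Rabs_pos (v 0)). specialize (Hv 0 ltac:(unfold inI; lra)). lra. }
  assert (Tf := J_minus_sum_n_le f v lam C n Uf Hlam Ef Hv
                  (fun q Hq => Hf q (proj2 Hq) (proj1 Hq))).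
  assert (T0 := J_minus_sum_n_le f0 v lam C n U0 Hlam E0 Hv
                  (fun q Hq => iter_f0_neq0 q (proj1 Hq))).
  fold mu in Tf, T0.
  assert (Hsmall : C * mu ^ S n / (1 - mu) <= C * (e / 2)).
  { unfold Rdiv. rewrite Rmult_assoc. apply Rmult_le_compat_l; assumption. }
  replace (J f v - J f0 v) with ((J f v - sum_n (Jterm f v) n) +
     (sum_n (Jterm f v) n - sum_n (Jterm f0 v) n) - (J f0 v - sum_n (Jterm f0 v) n)) by ring.
  eapply Rle_trans; [apply Rabs_triang|]. rewrite Rabs_Ropp.
  pose proof (Rabs_triang (J f v - sum_n (Jterm f v) n)
                          (sum_n (Jterm f v) n - sum_n (Jterm f0 v) n)).
  lra.
Qed.

Lemma filterlim_orbit_dist (n : nat) :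
  filterlim (fun f => sum_n (fun i => Rabs (iter f i 0 - iter f0 i 0) +
                                      Rabs (Dfn f i (f 0) - Dfn f0 i (f0 0))) n)
    (near_U1 f0) (locally 0).
Proof.
  replace (locally 0) with (locally (sum_n (fun _ => 0) n)) by (now rewrite sum_n_const, Rmult_0_r).
  apply filterlim_sum_n. intros i. apply filterlim_Rabs_iff. intros eps Heps.
  assert (Hiter := proj1 (filterlim_Rabs_iff _ _) (filterlim_iter i) (eps / 2) ltac:(lra)).
  assert (HDfn := proj1 (filterlim_Rabs_iff _ _) (filterlim_Dfn i) (eps / 2) ltac:(lra)).
  generalize (filter_and _ _ Hiter HDfn). apply filter_imp. intros f [H1 H2].
  rewrite Rminus_0_r, Rabs_pos_eq by (apply Rplus_le_le_0_compat; apply Rabs_pos). lra.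
Qed.

Lemma J_uniformly_close_Bk1 (eta : R) : eta > 0 ->
  near_U1 f0 (fun f => forall v, Bk1 v -> Rabs (J f v - J f0 v) <= eta * norm1 v).
Proof.
  intros Heta. destruct (near_U1_J_minus_le (eta / 2)) as [n Hn]; [lra|].
  destruct near_U1_expanding as [lam [Hlam [E0 Enear]]].
  assert (Hside : near_U1 f0 (fun f => forall i, (i <= n)%nat -> 0 <= iter f i 0 * iter f0 i 0)).
  { apply filter_forall_le. intros [|i].
    - apply filter_forall. intros f. simpl. lra.
    - eapply filter_imp; [|apply (near_U1_iter_same_side (S i)); lia]. intros f H. lra. }
  assert (Hdist := proj1 (filterlim_Rabs_iff _ _) (filterlim_orbit_dist n) (eta / 2) ltac:(lra)).
  generalize (filter_and _ _ (filter_and _ _ (filter_and _ _ Hn Enear) (filter_and _ _ Hside Hdist))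
                (near_U1_U1 f0)).
  apply filter_imp. intros f [[[Htail Ef] [Sf Hsmall]] Uf] v Hv.
  rewrite Rminus_0_r in Hsmall.
  assert (HC : 0 <= norm1 v).
  { eapply Rle_trans; [apply Rabs_pos | apply (Bk1_abs_le_norm1 v 0 Hv); unfold inI; lra]. }
  eapply Rle_trans; [apply (Htail v (norm1 v)); intros x Hx; now apply Bk1_abs_le_norm1|].
  eapply Rle_trans; [apply Rplus_le_compat_l, (Rabs_sum_n_minus_le _ _
    (fun i => norm1 v * (Rabs (iter f i 0 - iter f0 i 0) +
                         Rabs (Dfn f i (f 0) - Dfn f0 i (f0 0)))))|].
  - intros i Hi. apply Jterm_minus_le; auto;
      [apply (expanding_Dfn_ge1 f lam) | apply (expanding_Dfn_ge1 f0 lam)]; auto; lra.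
  - rewrite (sum_n_mult_l (norm1 v)). change (mult (norm1 v) ?s) with (norm1 v * s).
    set (S := sum_n _ n).
    assert (HS : S < eta / 2) by (eapply Rle_lt_trans; [apply Rle_abs | exact Hsmall]).
    assert (norm1 v * S <= norm1 v * (eta / 2)) by (apply Rmult_le_compat_l; lra). lra.
Qed.

Lemma filterlim_Jterm (v0 : R -> R) (i : nat) : cont_on (-1) 1 v0 ->
  filterlim (fun f => Jterm f v0 i) (near_U1 f0) (locally (Jterm f0 v0 i)).
Proof.
  intros Hv0. destruct (U1_expanding f0 U0) as [lam [Hlam E0]].
  assert (HD0 := expanding_Dfn_ge1 f0 lam i U0 ltac:(lra) E0).
  unfold Jterm. apply filterlim_Rdiv.
  - intro E. rewrite E, Rabs_R0 in HD0. lra.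
  - apply (filterlim_comp_within inI); [apply near_U1_iter_in_I | apply filterlim_iter |].
    apply Hv0, iter_in_I; [exact U0 | unfold inI; lra].
  - apply filterlim_Dfn.
Qed.

Lemma J_continuous_Bk0 (v0 : R -> R) (eps : R) : Bk0 v0 -> eps > 0 ->
  near_U1 f0 (fun f => Rabs (J f v0 - J f0 v0) < eps).
Proof.
  intros [Cl [Cr _]] Heps.
  assert (Hv0 : cont_on (-1) 1 v0) by (apply (cont_on_glue (-1) 0 1); [lra | exact Cl | exact Cr]).
  destruct (cont_on_bounded (-1) 1 v0 ltac:(lra) Hv0) as [C HC].
  assert (HC0 : 0 <= C).
  { pose proof (Rabs_pos (v0 0)). specialize (HC 0 ltac:(unfold inP; lra)). lra. }
  destruct (near_U1_J_minus_le (eps / (2 * (C + 1)))) as [n Hn].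
  { apply Rdiv_lt_0_compat; lra. }
  assert (Hsum := proj1 (filterlim_Rabs_iff _ _)
                    (filterlim_sum_n _ _ n (fun i => filterlim_Jterm v0 i Hv0))
                    (eps / 2) ltac:(lra)).
  generalize (filter_and _ _ Hn Hsum). apply filter_imp. intros f [Hf Hs].
  change (Rabs (sum_n (Jterm f v0) n - sum_n (Jterm f0 v0) n) < eps / 2) in Hs.
  eapply Rle_lt_trans; [apply (Hf v0 C HC)|].
  replace (C * (eps / (2 * (C + 1)))) with (eps / 2 - eps / (2 * (C + 1))) by (field; lra).
  assert (0 < eps / (2 * (C + 1))) by (apply Rdiv_lt_0_compat; lra). lra.
Qed.

End Perturbation.

Theorem proposition3p2 (f0 : R -> R) :
  U1 f0 -> ~ c_periodic f0 ->
  (forall eta, eta > 0 ->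
     exists delta, delta > 0 /\
       forall f, U1 f -> norm1 (fun x => f x - f0 x) < delta ->
         forall v, Bk1 v -> Rabs (J f v - J f0 v) <= eta * norm1 v)
  /\
  (forall v0, Bk0 v0 ->
     forall eps, eps > 0 ->
       exists delta, delta > 0 /\
         forall f, U1 f -> norm1 (fun x => f x - f0 x) < delta ->
           Rabs (J f v0 - J f0 v0) < eps).
Proof.
  intros U0 NP. split.
  - intros eta Heta. exact (J_uniformly_close_Bk1 f0 U0 NP eta Heta).
  - intros v0 Hv0 eps Heps. exact (J_continuous_Bk0 f0 U0 NP v0 eps Hv0 Heps).
Qed.
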